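(* Let $k\ge 4$, $n=2k-1$, $\eta=(\eta_1<\dots<\eta_l)\in\mathbb{D}_k\setminus\{(3,k-3)\}$, and let $Y_{2\eta^*}$ be the Young diagram whose main diagonal consists of exactly the cells $c_{1,1},\dots,c_{l+1,l+1}$ and which satisfies $h_{1,1}=2n-4$, $h_{i,i}=2\eta_{l-(i-2)}$ for $2\le i\le l+1$, and $a(c_{i,i})=l(c_{i,i})+1$ for $1\le i\le l+1$. Let $\lambda$ be the partition whose parts are the hook lengths of the first-column cells of $Y_{2\eta^*}$. Then: (1) $\lambda$ has exactly $n-2$ parts; (2) its largest part is $\lambda_{n-2}=2n-4$; (3) its number of missing parts is $\#\mathcal{M}_\lambda=n-2$.
   Context: $\mathbb{D}_N$ is the set of partitions of $N$ into distinct parts, i.e. sequences $(\eta_1<\dots<\eta_l)$ of positive integers with sum $N$ and $l\ge 2$. For a partition $\lambda=(\lambda_1<\dots<\lambda_t)$ into distinct parts, $\mathcal{M}_\lambda=\{1,\dots,\lambda_t\}\setminus\{\lambda_1,\dots,\lambda_t\}$. Young diagrams are in English convention: rows top to bottom, columns left to right, $c_{i,j}$ the cell in row $i$, column $j$; arm $a(c_{i,j})$ = number of cells to its right in its row, leg $l(c_{i,j})$ = number of cells below it in its column, hook length $h_{i,j}=a+l+1$. *)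

(* Young diagrams as sequences of row lengths (English convention),
   cells indexed 1-based: c_{i,j} = row i, column j. *)
From mathcomp Require Import all_boot.
Set Implicit Arguments. Unset Strict Implicit. Unset Printing Implicit Defensive.

Definition is_young (Y : seq nat) : bool := sorted geq Y && all (fun r => 0 < r) Y.

(* length of row i (1-based); 0 if the row does not exist *)
Definition row_len (Y : seq nat) (i : nat) : nat := nth 0 Y i.-1.
Definition col_len (Y : seq nat) (j : nat) : nat := count (fun r => j <= r) Y.

Definition in_cell (Y : seq nat) (i j : nat) : bool :=
  [&& 0 < i, 0 < j & j <= row_len Y i].

Definition arm (Y : seq nat) (i j : nat) : nat := row_len Y i - j.
Definition leg (Y : seq nat) (i j : nat) : nat := col_len Y j - i.
Definition hook (Y : seq nat) (i j : nat) : nat := arm Y i j + leg Y i j + 1.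

Definition in_D (N : nat) (eta : seq nat) : bool :=
  [&& sorted ltn eta, all (fun x => 0 < x) eta, sumn eta == N & 2 <= size eta].

Definition part (eta : seq nat) (i : nat) : nat := nth 0 eta i.-1.

Definition is_Y2eta (n : nat) (eta : seq nat) (Y : seq nat) : Prop :=
  let l := size eta in
  [/\ is_young Y,
      (forall i, 0 < i -> in_cell Y i i = (i <= l.+1)),
      hook Y 1 1 = 2 * n - 4,
      (forall i, 2 <= i <= l.+1 -> hook Y i i = 2 * part eta (l - (i - 2))) &
      (forall i, 1 <= i <= l.+1 -> arm Y i i = leg Y i i + 1)].

(* the partition (increasing order lambda_1 < ... < lambda_t) whose parts are the
   hook lengths of the first-column cells of Y *)
Definition first_col_hooks (Y : seq nat) : seq nat :=
  rev [seq hook Y i 1 | i <- iota 1 (size Y)].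

Definition missing (lam : seq nat) : seq nat :=
  [seq m <- iota 1 (last 0 lam) | m \notin lam].

From mathcomp Require Import all_boot zify.

(* Parts (1)-(3) only use that Y is a Young diagram with
   a(c_{1,1}) = l(c_{1,1}) + 1.  If Y has N rows, its first row then has
   N + 1 cells, so h_{1,1} = 2N and N = n - 2.  The first-column hooks
   h_{i,1} = (length of row i) + N - i strictly decrease from
   h_{1,1} = 2n - 4, so lambda has n - 2 distinct parts in [1, 2n - 4] and
   exactly n - 2 values are missing.  Such a Y exists: prescribe weakly
   decreasing lengths c_1 >= ... >= c_{l+1} >= l + 1 of the first l + 1
   columns, give row i <= l + 1 the length c_i + 1, and fill the rows below
   so that the first l + 1 columns have the prescribed lengths. *)

Lemma nth_leq_sumn (s : seq nat) i : nth 0 s i <= sumn s.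
Proof.
elim: s i => [|x s IH] [|i] //=; first exact: leq_addr.
exact: leq_trans (IH i) (leq_addl _ _).
Qed.

Lemma count_leq_iota m N : m <= N -> count (fun i => i <= m) (iota 1 N) = m.
Proof.
move=> le_mN; rewrite -(subnKC le_mN) iotaD count_cat.
rewrite (eq_in_count (a2 := predT)) ?count_predT ?size_iota; last first.
  by move=> i; rewrite mem_iota /=; lia.
rewrite (eq_in_count (a2 := pred0)) ?count_pred0 ?addn0 //.
by move=> i; rewrite mem_iota /=; lia.
Qed.

Lemma count_iota_downclosed (P : pred nat) d j :
  (forall a b, 0 < a <= b -> b <= d -> P b -> P a) -> 0 < j <= d ->
  (j <= count P (iota 1 d)) = P j.
Proof.
move=> P_down j_in; case Pj: (P j).
  have P_prefix : all P (iota 1 j).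
    by apply/allP => a; rewrite mem_iota => a_in; apply: (P_down a j) => //; lia.
  move: P_prefix; rewrite all_count size_iota => /eqP count_prefix.
  rewrite -(subnKC (_ : j <= d)); last lia.
  by rewrite iotaD count_cat count_prefix leq_addr.
have noP_suffix : ~~ has P (iota j (d - j.-1)).
  apply/hasPn => b; rewrite mem_iota => b_in; apply/negP => Pb.
  by move: Pj; rewrite (P_down j b) //; lia.
rewrite -(subnKC (_ : j.-1 <= d)); last lia.
rewrite iotaD count_cat (_ : 1 + j.-1 = j); last lia.
move: noP_suffix; rewrite has_count -leqNgt leqn0 => /eqP->.
by have := count_size P (iota 1 j.-1); rewrite size_iota; lia.
Qed.

Lemma size_missing (lam : seq nat) :
  sorted ltn lam -> all (fun x => 0 < x) lam ->
  size (missing lam) = last 0 lam - size lam.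
Proof.
rewrite ltn_sorted_uniq_leq => /andP[lam_uniq lam_sorted] lam_pos.
have lam_le_last x : x \in lam -> x <= last 0 lam.
  move=> x_lam; rewrite -nth_last -(nth_index 0 x_lam).
  have ix : index x lam < size lam by rewrite index_mem.
  by apply: (sorted_leq_nth leq_trans leqnn) => //; rewrite ?inE /=; lia.
have lam_in_iota : lam =i [seq m <- iota 1 (last 0 lam) | m \in lam].
  move=> x; rewrite mem_filter mem_iota.
  have [x_lam|//] := boolP (x \in lam).
  by rewrite (allP lam_pos x x_lam) add1n ltnS lam_le_last.
have size_lam : size lam = count (fun m => m \in lam) (iota 1 (last 0 lam)).
  by rewrite -size_filter; apply/perm_size/uniq_perm; rewrite ?filter_uniq ?iota_uniq.
have split_iota : count (fun m => m \in lam) (iota 1 (last 0 lam))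
    + count (fun m => m \notin lam) (iota 1 (last 0 lam)) = last 0 lam.
  by rewrite count_predC size_iota.
by rewrite /missing size_filter -[in RHS]split_iota size_lam addKn.
Qed.

Section FirstColumnHooks.
Variable Y : seq nat.
Hypothesis Y_young : is_young Y.

Lemma row_len_nonincr i j : i <= j -> row_len Y j <= row_len Y i.
Proof.
move=> le_ij; rewrite /row_len.
have [j_in|j_out] := ltnP j.-1 (size Y); last by rewrite nth_default.
case/andP: Y_young => Y_sorted _.
apply: (sorted_leq_nth (fun _ _ _ h1 h2 => leq_trans h2 h1) leqnn) => //;
  rewrite ?inE /=; lia.
Qed.

Lemma row_len_gt0 i : 0 < i <= size Y -> 0 < row_len Y i.
Proof.
move=> i_in; case/andP: Y_young => _ /(all_nthP 0); apply; rewrite -subn1; lia.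
Qed.

Lemma col_len1 : col_len Y 1 = size Y.
Proof. by apply/eqP; rewrite -all_count; case/andP: Y_young. Qed.

Lemma hook_first_col i : 0 < i <= size Y -> hook Y i 1 = row_len Y i + size Y - i.
Proof.
by move=> i_in; have := row_len_gt0 _ i_in; rewrite /hook /arm /leg col_len1; lia.
Qed.

Lemma first_col_hooks_sorted : sorted ltn (first_col_hooks Y).
Proof.
rewrite /first_col_hooks rev_sorted.
apply: (homo_sorted_in (P := [pred i | 0 < i <= size Y])); last first.
- exact: iota_ltn_sorted.
- by apply/allP => i; rewrite mem_iota inE; lia.
move=> i j /[!inE] i_in j_in lt_ij /=.
rewrite !hook_first_col //; have := row_len_nonincr _ _ (ltnW lt_ij).
have := row_len_gt0 _ j_in; lia.
Qed.

Lemma first_col_hooks_gt0 : all (fun x => 0 < x) (first_col_hooks Y).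
Proof. by rewrite all_rev all_map; apply/allP => i _ /=; rewrite /hook addn1. Qed.

Lemma size_first_col_hooks : size (first_col_hooks Y) = size Y.
Proof. by rewrite size_rev size_map size_iota. Qed.

Lemma last_first_col_hooks : 0 < size Y -> last 0 (first_col_hooks Y) = hook Y 1 1.
Proof.
by rewrite /first_col_hooks; case: (size Y) => //= N _; rewrite rev_cons last_rcons.
Qed.

Lemma hook11_of_arm_leg : arm Y 1 1 = leg Y 1 1 + 1 -> hook Y 1 1 = (size Y).*2.
Proof.
rewrite /hook /arm /leg col_len1 -addnn.
have [Y0|Y_gt0] := posnP (size Y); first by rewrite Y0 /row_len; case: Y Y0.
by have := row_len_gt0 1; lia.
Qed.

End FirstColumnHooks.

Section DiagramFromColumns.
Variables (d : nat) (c : nat -> nat).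
Hypothesis d_gt0 : 0 < d.
Hypothesis c_nonincr : forall i j, 0 < i <= j -> j <= d -> c j <= c i.
Hypothesis c_ge_d : forall j, 0 < j <= d -> d <= c j.

(* The diagram with Frobenius coordinates (c_i + 1 - i | c_i - i), 1 <= i <= d. *)
Definition frob_row (i : nat) : nat :=
  if i <= d then (c i).+1 else count (fun j => i <= c j) (iota 1 d).

Definition frob_diagram : seq nat := map frob_row (iota 1 (c 1)).

Lemma frob_row_low i j : d < i -> 0 < j <= d -> (j <= frob_row i) = (i <= c j).
Proof.
move=> lt_di j_in; rewrite /frob_row (ltn_geF lt_di).
apply: count_iota_downclosed => // a b a_le_b b_le_d /= le_i_cb.
by apply: leq_trans le_i_cb (c_nonincr _ _ a_le_b b_le_d).
Qed.

Lemma frob_row_le_d i : d < i -> frob_row i <= d.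
Proof.
move=> lt_di; rewrite /frob_row (ltn_geF lt_di).
by have := count_size (fun j => i <= c j) (iota 1 d); rewrite size_iota.
Qed.

Lemma frob_row_nonincr i j : 0 < i <= j -> frob_row j <= frob_row i.
Proof.
move=> i_le_j; have [j_le_d|lt_dj] := leqP j d.
  by rewrite /frob_row j_le_d (_ : i <= d) ?ltnS ?c_nonincr //; lia.
have [i_le_d|lt_di] := leqP i d.
  have d_le_ci : d <= c i by apply: c_ge_d; lia.
  by rewrite [frob_row i]/frob_row i_le_d; have := frob_row_le_d _ lt_dj; lia.
rewrite /frob_row (ltn_geF lt_dj) (ltn_geF lt_di).
by apply: sub_count => a /=; lia.
Qed.

Lemma frob_row_gt0 i : 0 < i <= c 1 -> 0 < frob_row i.
Proof.
move=> i_in; have [i_le_d|lt_di] := leqP i d; first by rewrite /frob_row i_le_d.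
by rewrite frob_row_low //; lia.
Qed.

Lemma row_len_frob i : 0 < i <= c 1 -> row_len frob_diagram i = frob_row i.
Proof.
move=> i_in; rewrite /row_len /frob_diagram (nth_map 0) ?size_iota ?nth_iota;
  rewrite -?subn1; try lia.
by congr frob_row; lia.
Qed.

Lemma frob_diagram_young : is_young frob_diagram.
Proof.
apply/andP; split.
  apply: (homo_sorted_in (P := [pred i | 0 < i])) (iota_sorted 1 _).
  - by move=> i j /[!inE] i_gt0 _ /= le_ij; apply: frob_row_nonincr; lia.
  - by apply/allP => i; rewrite mem_iota inE; lia.
apply/allP => r /mapP[i]; rewrite mem_iota => i_in ->.
by apply: frob_row_gt0; lia.
Qed.

Lemma col_len_frob j : 0 < j <= d -> col_len frob_diagram j = c j.
Proof.
move=> j_in; have cj_le_c1 : c j <= c 1 by apply: c_nonincr; lia.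
rewrite /col_len count_map -(count_leq_iota _ _ cj_le_c1).
apply: eq_in_count => i; rewrite mem_iota => i_in /=.
have [i_le_d|lt_di] := leqP i d; last exact: frob_row_low _ _ lt_di j_in.
have d_le_ci : d <= c i by apply: c_ge_d; lia.
have d_le_cj : d <= c j by apply: c_ge_d; lia.
by rewrite /frob_row i_le_d; apply/idP/idP => _; lia.
Qed.

Lemma in_cell_frob_diag i : 0 < i -> in_cell frob_diagram i i = (i <= d).
Proof.
move=> i_gt0; rewrite /in_cell i_gt0 /=.
have [i_le_d|lt_di] := leqP i d.
  have d_le_ci : d <= c i by apply: c_ge_d; lia.
  have d_le_c1 : d <= c 1 by apply: c_ge_d; lia.
  rewrite row_len_frob /frob_row ?i_le_d.
    by rewrite leqW // (leq_trans i_le_d d_le_ci).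
  by rewrite i_gt0 (leq_trans i_le_d d_le_c1).
apply/negbTE; rewrite -ltnNge.
have [i_le_c1|lt_c1i] := leqP i (c 1).
  by rewrite row_len_frob ?i_gt0 //; apply: leq_ltn_trans (frob_row_le_d _ lt_di) _.
by rewrite /row_len nth_default // size_map size_iota -subn1; lia.
Qed.

Lemma arm_frob_diag i : 0 < i <= d -> arm frob_diagram i i = (c i).+1 - i.
Proof.
move=> i_in; have d_le_c1 : d <= c 1 by apply: c_ge_d; lia.
have i_le_d : i <= d by lia.
by rewrite /arm row_len_frob /frob_row ?i_le_d //; lia.
Qed.

Lemma leg_frob_diag i : 0 < i <= d -> leg frob_diagram i i = c i - i.
Proof. by move=> i_in; rewrite /leg col_len_frob. Qed.

End DiagramFromColumns.

(* With arm c_i + 1 - i and leg c_i - i the diagonal hook is 2 (c_i - i + 1),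
   which these column lengths make equal to 2n - 4 and 2 eta_{l-(i-2)}. *)
Definition Y2eta_col (n : nat) (eta : seq nat) (i : nat) : nat :=
  if i == 1 then n - 2 else part eta (size eta - (i - 2)) + i - 1.

Section Y2etaColumns.
Variables (k : nat) (eta : seq nat).
Hypothesis k_ge4 : 4 <= k.
Hypothesis eta_D : in_D k eta.
Local Notation l := (size eta).
Local Notation c := (Y2eta_col (2 * k - 1) eta).

Lemma Y2eta_col_step i : 0 < i <= l -> c i.+1 <= c i.
Proof.
case/and4P: eta_D => eta_sorted _ /eqP eta_sum l_ge2 /andP[i_gt0 i_le_l].
rewrite /Y2eta_col /part eqSS (negbTE (lt0n_neq0 i_gt0)).
case: (i =P 1) => [->|/eqP i_ne1] /=.
  by have := nth_leq_sumn eta l.-1; rewrite eta_sum subnn subn0 -subn1; lia.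
have i_ge2 : 1 < i by rewrite ltn_neqAle eq_sym i_ne1.
have : nth 0 eta (l - i) < nth 0 eta (l - i).+1.
  by apply: (sorted_ltn_nth ltn_trans) => //; rewrite inE /=; lia.
rewrite -!subn1 (_ : l - (i.+1 - 2) - 1 = l - i); last lia.
by rewrite (_ : l - (i - 2) - 1 = (l - i).+1); lia.
Qed.

Lemma Y2eta_col_nonincr i j : 0 < i <= j -> j <= l.+1 -> c j <= c i.
Proof.
move=> i_le_j j_le; apply: (homo_leq_in (D := [pred i | 0 < i <= l.+1])
  (r := fun x y => y <= x)) => //; rewrite ?inE; try lia.
- by move=> a b a_in b_in m; rewrite !inE in a_in b_in *; lia.
- by move=> a a_in Sa_in; rewrite !inE in a_in Sa_in; apply: Y2eta_col_step; lia.
Qed.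

Lemma Y2eta_col_ge j : 0 < j <= l.+1 -> l.+1 <= c j.
Proof.
case/and4P: eta_D => _ eta_pos _ l_ge2 j_in.
apply: leq_trans (Y2eta_col_nonincr _ _ j_in (leqnn _)).
have : 0 < part eta 1 by apply: (all_nthP 0 eta_pos); lia.
have l_gt0 : 0 < l := ltnW l_ge2.
by rewrite /Y2eta_col eqSS (negbTE (lt0n_neq0 l_gt0)) subSS subKn //; lia.
Qed.

End Y2etaColumns.

Lemma frob_diagram_Y2eta k eta : 4 <= k -> in_D k eta ->
  let n := 2 * k - 1 in
  is_Y2eta n eta (frob_diagram (size eta).+1 (Y2eta_col n eta)).
Proof.
move=> k_ge4 eta_D n; rewrite {}/n.
have c_nonincr := @Y2eta_col_nonincr k eta k_ge4 eta_D.
have c_ge := @Y2eta_col_ge k eta k_ge4 eta_D.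
set d := (size eta).+1 in c_nonincr c_ge *.
set c := Y2eta_col _ eta in c_nonincr c_ge *.
have d_gt0 : 0 < d by [].
have arm_ii := @arm_frob_diag d c d_gt0 c_ge.
have leg_ii := @leg_frob_diag d c d_gt0 c_nonincr c_ge.
split.
- exact: @frob_diagram_young d c d_gt0 c_nonincr c_ge.
- exact: @in_cell_frob_diag d c d_gt0 c_ge.
- by rewrite /hook arm_ii ?leg_ii // /c /Y2eta_col /=; lia.
- move=> i i_in; have := c_ge i; rewrite /hook arm_ii ?leg_ii; try lia.
  by rewrite /c /Y2eta_col ifN_eqC; lia.
- by move=> i i_in; have := c_ge i; rewrite arm_ii ?leg_ii; lia.
Qed.

Theorem corollary3p16 (k : nat) (eta : seq nat) :
  4 <= k ->
  in_D k eta ->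
  eta != [:: 3; k - 3] ->
  let n := 2 * k - 1 in
  (exists Y, is_Y2eta n eta Y) /\
  (forall Y, is_Y2eta n eta Y ->
     let lam := first_col_hooks Y in
     [/\ size lam = n - 2,
         nth 0 lam (n - 2).-1 = 2 * n - 4 &
         size (missing lam) = n - 2]).
Proof.
move=> k_ge4 eta_D _ n; split.
  by exists (frob_diagram (size eta).+1 (Y2eta_col n eta)); exact: frob_diagram_Y2eta.
move=> Y [Y_young _ hook11 _ arm_leg] lam.
have size_Y : size Y = n - 2.
  by have := @hook11_of_arm_leg Y Y_young (arm_leg 1 isT); rewrite hook11 -muln2; lia.
have size_lam : size lam = n - 2 by rewrite size_first_col_hooks.
have last_lam : last 0 lam = 2 * n - 4.
  by rewrite last_first_col_hooks // size_Y; lia.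
split => //; first by rewrite -size_lam nth_last.
rewrite size_missing ?first_col_hooks_sorted ?first_col_hooks_gt0 //.
by rewrite last_lam size_lam; lia.
Qed.
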